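(* For $\theta\in(0,2\pi]$ let $$a(\theta)=2\frac{1-\cos\theta}{\theta^2}-\frac{\sin\theta}{2\theta},\qquad b(\theta)=\frac{1-\cos\theta}{\theta^4}-\frac{\sin\theta}{2\theta^3},$$ and $a(0)=1/2$, $b(0)=1/24$. Then (i) $a$ and $b$ are strictly decreasing and strictly positive on $(0,2\pi)$, with $\frac12=a(0)>a(\theta)>a(2\pi)=0$ and $\frac1{24}=b(0)>b(\theta)>b(2\pi)=0$ for $\theta\in(0,2\pi)$; (ii) $a(\theta)/b(\theta)$ is strictly increasing on $[0,2\pi)$, and $\sup_{0<\theta<2\pi}a(\theta)/b(\theta)=\lim_{\theta\to2\pi-}a(\theta)/b(\theta)=4\pi^2$. *)

From Stdlib Require Import Reals.
From Coquelicot Require Import Coquelicot.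
Open Scope R_scope.

Definition fa (t : R) : R :=
  if Req_EM_T t 0 then 1/2
  else 2 * (1 - cos t) / t ^ 2 - sin t / (2 * t).

Definition fb (t : R) : R :=
  if Req_EM_T t 0 then 1/24
  else (1 - cos t) / t ^ 4 - sin t / (2 * t ^ 3).

From Stdlib Require Import Reals Lra.
From Coquelicot Require Import Coquelicot.
Open Scope R_scope.

(** Both derivatives share the numerator
    [h t = 5 t sin t - t^2 cos t + 8 cos t - 8]: [a' = h / (2 t^3)] and
    [b' = h / (2 t^5)].  With [t = 2u],
    [h = - 4 (sin u - u cos u)^2 + 4 sin u ((u^2 - 3) sin u + 3 u cos u)],
    and both terms are negative for [0 < u < PI], so [a] and [b] decrease to
    their common zero at [2 PI].  From [a = t^2 b + (1 - cos t) / t^2] one gets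
    [(a / b)' = - h (1 - cos t) / (2 t^7 b^2) > 0].  Near [0] the values [1/2],
    [1/24] and the ratio [12] are compared through Taylor bounds, and cancelling
    [sin (t/2)] in [a / b] gives a formula continuous at [2 PI] with value
    [4 PI^2] there. *)

Lemma decreasing_of_derive_neg (f df : R -> R) x y : x < y ->
  (forall c, x <= c <= y -> is_derive f c (df c)) ->
  (forall c, x < c < y -> df c < 0) -> f y < f x.
Proof.
  intros Hxy Hd Hneg.
  destruct (MVT_cor2 f df x y Hxy) as [c [Hmvt Hc]].
  { intros c Hc. apply is_derive_Reals, Hd, Hc. }
  specialize (Hneg c Hc). nra.
Qed.

Lemma increasing_of_derive_pos (f df : R -> R) x y : x < y ->
  (forall c, x <= c <= y -> is_derive f c (df c)) ->
  (forall c, x < c < y -> 0 < df c) -> f x < f y.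
Proof.
  intros Hxy Hd Hpos. apply Ropp_lt_cancel.
  apply (decreasing_of_derive_neg (fun t => - f t) (fun t => - df t)); [exact Hxy | |].
  - intros c Hc. exact (is_derive_opp _ _ _ (Hd c Hc)).
  - intros c Hc. specialize (Hpos c Hc). lra.
Qed.

Lemma at_left_interval a b : a < b -> at_left b (fun s => a < s < b).
Proof.
  intros Hab. apply (locally_interval _ b a p_infty); [exact Hab | exact I |].
  intros s Has _ Hsb. split; [exact Has | exact Hsb].
Qed.

Lemma is_lub_increasing_left_limit (f : R -> R) a b l : a < b ->
  (forall x y, a < x -> x < y -> y < b -> f x < f y) ->
  filterlim f (at_left b) (locally l) ->
  is_lub (fun r => exists t, a < t < b /\ r = f t) l.
Proof.
  intros Hab Hinc Hlim. split.
  - intros r [t [Ht ->]].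
    apply (filterlim_le (F := at_left b) (fun _ => f t) f (f t) l);
      [| apply filterlim_const | exact Hlim].
    apply (filter_imp (fun s => t < s < b)); [| apply at_left_interval; lra].
    intros s Hs. left. apply Hinc; lra.
  - intros M HM.
    apply (filterlim_le (F := at_left b) f (fun _ => M) l M);
      [| exact Hlim | apply filterlim_const].
    apply (filter_imp (fun s => a < s < b)); [| apply at_left_interval, Hab].
    intros s Hs. apply HM. exists s. split; [exact Hs | reflexivity].
Qed.

Lemma mul_cos_lt_sin u : 0 < u <= PI -> u * cos u < sin u.
Proof.
  intros Hu.
  assert (H : sin 0 - 0 * cos 0 < sin u - u * cos u).
  { apply (increasing_of_derive_pos (fun v => sin v - v * cos v) (fun v => v * sin v));
      [lra | |].
    - intros c _. auto_derive; [exact I | ring].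
    - intros c Hc. apply Rmult_lt_0_compat; [lra | apply sin_gt_0; lra]. }
  rewrite sin_0 in H. lra.
Qed.

Lemma sin_cos_cubic_neg u : 0 < u <= PI -> (u ^ 2 - 3) * sin u + 3 * u * cos u < 0.
Proof.
  intros Hu.
  assert (H : (u ^ 2 - 3) * sin u + 3 * u * cos u < (0 ^ 2 - 3) * sin 0 + 3 * 0 * cos 0).
  { apply (decreasing_of_derive_neg (fun v => (v ^ 2 - 3) * sin v + 3 * v * cos v)
             (fun v => v * (v * cos v - sin v))); [lra | |].
    - intros c _. auto_derive; [exact I | ring].
    - intros c Hc. assert (c * cos c < sin c) by (apply mul_cos_lt_sin; lra).
      apply Rmult_pos_neg; lra. }
  rewrite sin_0 in H. lra.
Qed.

Definition deriv_num (t : R) : R := 5 * t * sin t - t ^ 2 * cos t + 8 * cos t - 8.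

Lemma deriv_num_neg t : 0 < t < 2 * PI -> deriv_num t < 0.
Proof.
  intros Ht. set (u := t / 2).
  assert (Hsin : 0 < sin u) by (apply sin_gt_0; unfold u; lra).
  assert (Hcubic := sin_cos_cubic_neg u ltac:(unfold u; lra)).
  assert (Hpyth : sin u ^ 2 + cos u ^ 2 = 1)
    by (rewrite <- (sin2_cos2 u); unfold Rsqr; ring).
  replace (deriv_num t)
    with (- 4 * (sin u - u * cos u) ^ 2 + 4 * sin u * ((u ^ 2 - 3) * sin u + 3 * u * cos u)
          + 8 * (sin u ^ 2 + cos u ^ 2 - 1)).
  2: { assert (Ht2 : t = 2 * u) by (unfold u; field).
       unfold deriv_num. rewrite Ht2, sin_2a, cos_2a. ring. }
  assert (sin u * ((u ^ 2 - 3) * sin u + 3 * u * cos u) < 0) by (apply Rmult_pos_neg; lra).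
  rewrite Hpyth. nra.
Qed.

Definition A (t : R) : R := 2 * (1 - cos t) / t ^ 2 - sin t / (2 * t).
Definition B (t : R) : R := (1 - cos t) / t ^ 4 - sin t / (2 * t ^ 3).

Lemma fa_eq t : t <> 0 -> fa t = A t.
Proof. intros Ht. unfold fa. destruct (Req_EM_T t 0); [contradiction | reflexivity]. Qed.

Lemma fb_eq t : t <> 0 -> fb t = B t.
Proof. intros Ht. unfold fb. destruct (Req_EM_T t 0); [contradiction | reflexivity]. Qed.

Lemma fa_0 : fa 0 = 1 / 2.
Proof. unfold fa. destruct (Req_EM_T 0 0); [reflexivity | contradiction]. Qed.

Lemma fb_0 : fb 0 = 1 / 24.
Proof. unfold fb. destruct (Req_EM_T 0 0); [reflexivity | contradiction]. Qed.

Lemma is_derive_A t : t <> 0 -> is_derive A t (deriv_num t / (2 * t ^ 3)).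
Proof.
  intros Ht. unfold A, deriv_num. auto_derive.
  - repeat split; repeat apply Rmult_integral_contrapositive_currified; lra.
  - field. exact Ht.
Qed.

Lemma is_derive_B t : t <> 0 -> is_derive B t (deriv_num t / (2 * t ^ 5)).
Proof.
  intros Ht. unfold B, deriv_num. auto_derive.
  - repeat split; repeat apply Rmult_integral_contrapositive_currified; lra.
  - field. exact Ht.
Qed.

Lemma A_decreasing x y : 0 < x -> x < y -> y <= 2 * PI -> A y < A x.
Proof.
  intros Hx Hxy Hy.
  apply (decreasing_of_derive_neg A (fun t => deriv_num t / (2 * t ^ 3))); [exact Hxy | |].
  - intros c Hc. apply is_derive_A. lra.
  - intros c Hc. apply Rdiv_neg_pos; [apply deriv_num_neg; lra |].
    assert (0 < c ^ 3) by (apply pow_lt; lra). lra.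
Qed.

Lemma B_decreasing x y : 0 < x -> x < y -> y <= 2 * PI -> B y < B x.
Proof.
  intros Hx Hxy Hy.
  apply (decreasing_of_derive_neg B (fun t => deriv_num t / (2 * t ^ 5))); [exact Hxy | |].
  - intros c Hc. apply is_derive_B. lra.
  - intros c Hc. apply Rdiv_neg_pos; [apply deriv_num_neg; lra |].
    assert (0 < c ^ 5) by (apply pow_lt; lra). lra.
Qed.

Lemma A_2PI : A (2 * PI) = 0.
Proof. unfold A. rewrite cos_2PI, sin_2PI. field. apply PI_neq0. Qed.

Lemma B_2PI : B (2 * PI) = 0.
Proof. unfold B. rewrite cos_2PI, sin_2PI. field. apply PI_neq0. Qed.

Lemma A_pos t : 0 < t < 2 * PI -> 0 < A t.
Proof. intros Ht. rewrite <- A_2PI. apply A_decreasing; lra. Qed.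

Lemma B_pos t : 0 < t < 2 * PI -> 0 < B t.
Proof. intros Ht. rewrite <- B_2PI. apply B_decreasing; lra. Qed.

Lemma sin_cos_taylor_lower t : 0 <= t <= 2 ->
  t - t ^ 3 / 6 + t ^ 5 / 120 - t ^ 7 / 5040 <= sin t /\
  1 - t ^ 2 / 2 + t ^ 4 / 24 - t ^ 6 / 720 <= cos t.
Proof.
  intros Ht.
  destruct (pre_sin_bound t 1) as [Hsin _]; [lra | lra |].
  destruct (pre_cos_bound t 1) as [Hcos _]; [lra | lra |].
  unfold sin_approx, cos_approx, sin_term, cos_term in *. simpl in Hsin, Hcos.
  split; [eapply Rle_trans; [| exact Hsin] | eapply Rle_trans; [| exact Hcos]];
    right; field.
Qed.

Lemma A_le_half t : 0 < t <= 2 -> A t <= 1 / 2.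
Proof.
  intros Ht. destruct (sin_cos_taylor_lower t) as [Hsin Hcos]; [lra |].
  assert (0 < t ^ 2) by nra.
  assert (Hgap : 0 <= t ^ 2 - 4 * (1 - cos t) + t * sin t).
  { assert (t * (t - t ^ 3 / 6 + t ^ 5 / 120 - t ^ 7 / 5040) <= t * sin t)
      by (apply Rmult_le_compat_l; lra).
    assert (0 <= t ^ 6 * (1 / 360 - t ^ 2 / 5040)) by (apply Rmult_le_pos; nra).
    nra. }
  replace (A t) with (1 / 2 - (t ^ 2 - 4 * (1 - cos t) + t * sin t) / (2 * t ^ 2))
    by (unfold A; field; lra).
  assert (0 <= (t ^ 2 - 4 * (1 - cos t) + t * sin t) / (2 * t ^ 2))
    by (apply Rdiv_le_0_compat; lra).
  lra.
Qed.

Lemma B_le_24th t : 0 < t <= 2 -> B t <= 1 / 24.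
Proof.
  intros Ht. destruct (sin_cos_taylor_lower t) as [Hsin Hcos]; [lra |].
  assert (0 < t ^ 4) by (apply pow_lt; lra).
  assert (Hgap : 0 <= t ^ 4 - 24 * (1 - cos t) + 12 * t * sin t).
  { assert (t * (t - t ^ 3 / 6 + t ^ 5 / 120 - t ^ 7 / 5040) <= t * sin t)
      by (apply Rmult_le_compat_l; lra).
    assert (0 <= t ^ 6 * (1 / 15 - t ^ 2 / 420)) by (apply Rmult_le_pos; nra).
    nra. }
  replace (B t) with (1 / 24 - (t ^ 4 - 24 * (1 - cos t) + 12 * t * sin t) / (24 * t ^ 4))
    by (unfold B; field; lra).
  assert (0 <= (t ^ 4 - 24 * (1 - cos t) + 12 * t * sin t) / (24 * t ^ 4))
    by (apply Rdiv_le_0_compat; lra).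
  lra.
Qed.

Lemma twelve_B_le_A t : 0 < t <= 2 -> 12 * B t <= A t.
Proof.
  intros Ht. destruct (sin_cos_taylor_lower t) as [Hsin Hcos]; [lra |].
  assert (0 < t ^ 4) by (apply pow_lt; lra).
  assert (Hgap : 0 <= (4 * t ^ 2 - 24) * (1 - cos t) + (12 * t - t ^ 3) * sin t).
  { assert ((12 * t - t ^ 3) * (t - t ^ 3 / 6 + t ^ 5 / 120 - t ^ 7 / 5040)
            <= (12 * t - t ^ 3) * sin t) by (apply Rmult_le_compat_l; nra).
    assert (0 <= (24 - 4 * t ^ 2) * ((t ^ 2 / 2 - t ^ 4 / 24 + t ^ 6 / 720) - (1 - cos t)))
      by (apply Rmult_le_pos; nra).
    assert (0 <= t ^ 6 * (1 / 15 - 13 * t ^ 2 / 2520 + t ^ 4 / 5040))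
      by (apply Rmult_le_pos; nra).
    nra. }
  replace (A t) with (12 * B t
    + ((4 * t ^ 2 - 24) * (1 - cos t) + (12 * t - t ^ 3) * sin t) / (2 * t ^ 4))
    by (unfold A, B; field; lra).
  assert (0 <= ((4 * t ^ 2 - 24) * (1 - cos t) + (12 * t - t ^ 3) * sin t) / (2 * t ^ 4))
    by (apply Rdiv_le_0_compat; lra).
  lra.
Qed.

Lemma A_lt_half t : 0 < t <= 2 * PI -> A t < 1 / 2.
Proof.
  intros Ht. assert (PI <= 4) by apply PI_4.
  assert (A t < A (t / 4)) by (apply A_decreasing; lra).
  assert (A (t / 4) <= 1 / 2) by (apply A_le_half; lra).
  lra.
Qed.

Lemma B_lt_24th t : 0 < t <= 2 * PI -> B t < 1 / 24.
Proof.
  intros Ht. assert (PI <= 4) by apply PI_4.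
  assert (B t < B (t / 4)) by (apply B_decreasing; lra).
  assert (B (t / 4) <= 1 / 24) by (apply B_le_24th; lra).
  lra.
Qed.

Lemma A_eq t : t <> 0 -> A t = t ^ 2 * B t + (1 - cos t) / t ^ 2.
Proof. intros Ht. unfold A, B. field. exact Ht. Qed.

Lemma one_sub_cos_pos t : 0 < t < 2 * PI -> 0 < 1 - cos t.
Proof.
  intros Ht. replace t with (2 * (t / 2)) by field. rewrite cos_2a_sin.
  assert (0 < sin (t / 2)) by (apply sin_gt_0; lra). nra.
Qed.

Lemma AB_ratio_increasing x y : 0 < x -> x < y -> y < 2 * PI -> A x / B x < A y / B y.
Proof.
  intros Hx Hxy Hy.
  apply (increasing_of_derive_pos (fun t => A t / B t)
    (fun t => (deriv_num t / (2 * t ^ 3) * B t - A t * (deriv_num t / (2 * t ^ 5))) / B t ^ 2));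
    [exact Hxy | |].
  - intros c Hc. assert (0 < B c) by (apply B_pos; lra).
    apply is_derive_div; [apply is_derive_A | apply is_derive_B | ]; lra.
  - intros c Hc.
    assert (0 < B c) by (apply B_pos; lra).
    assert (deriv_num c < 0) by (apply deriv_num_neg; lra).
    assert (0 < 1 - cos c) by (apply one_sub_cos_pos; lra).
    assert (0 < c ^ 7) by (apply pow_lt; lra).
    assert (0 < B c ^ 2) by (apply pow_lt; lra).
    rewrite A_eq by lra.
    replace (_ / B c ^ 2)
      with ((- deriv_num c) * (1 - cos c) / (2 * c ^ 7 * B c ^ 2)) by (field; lra).
    apply Rdiv_lt_0_compat; apply Rmult_lt_0_compat; lra.
Qed.

(* [A / B] after cancelling [sin (t/2)]; continuous at [2 PI], where [A / B] is [0 / 0]. *)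
Definition AB_ratio_ext (t : R) : R :=
  t ^ 2 + t ^ 2 * sin (t / 2) / (sin (t / 2) - t / 2 * cos (t / 2)).

Lemma AB_ratio_ext_eq t : 0 < t < 2 * PI -> A t / B t = AB_ratio_ext t.
Proof.
  intros Ht. unfold A, B, AB_ratio_ext.
  assert (Hsin : 0 < sin (t / 2)) by (apply sin_gt_0; lra).
  assert (Hgap := mul_cos_lt_sin (t / 2) ltac:(lra)).
  set (u := t / 2) in *.
  replace t with (2 * u) by (unfold u; field).
  rewrite sin_2a, cos_2a_sin.
  assert (0 < sin u * (sin u - u * cos u)) by (apply Rmult_lt_0_compat; lra).
  assert (0 < u) by (unfold u; lra).
  field. repeat split; lra.
Qed.

Lemma AB_ratio_ext_2PI : AB_ratio_ext (2 * PI) = 4 * PI ^ 2.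
Proof.
  unfold AB_ratio_ext. replace (2 * PI / 2) with PI by field.
  rewrite sin_PI, cos_PI. field. apply PI_neq0.
Qed.

Lemma AB_ratio_ext_continuous : continuous AB_ratio_ext (2 * PI).
Proof.
  apply (@ex_derive_continuous R_AbsRing R_NormedModule). unfold AB_ratio_ext. auto_derive.
  replace (2 * PI * / 2) with PI by field. rewrite sin_PI, cos_PI.
  assert (0 < PI) by apply PI_RGT_0. lra.
Qed.

Lemma ratio_increasing x y : 0 <= x -> x < y -> y < 2 * PI -> fa x / fb x < fa y / fb y.
Proof.
  intros Hx Hxy Hy. rewrite (fa_eq y), (fb_eq y) by lra.
  destruct (Req_dec x 0) as [-> | Hx0].
  - rewrite fa_0, fb_0. assert (PI <= 4) by apply PI_4.
    assert (12 * B (y / 4) <= A (y / 4)) by (apply twelve_B_le_A; lra).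
    assert (0 < B (y / 4)) by (apply B_pos; lra).
    assert (A (y / 4) / B (y / 4) < A y / B y) by (apply AB_ratio_increasing; lra).
    enough (12 <= A (y / 4) / B (y / 4)) by lra.
    apply (Rle_div_r 12); lra.
  - rewrite fa_eq, fb_eq by lra. apply AB_ratio_increasing; lra.
Qed.

Lemma ratio_left_limit :
  filterlim (fun t => fa t / fb t) (at_left (2 * PI)) (locally (4 * PI ^ 2)).
Proof.
  assert (0 < PI) by apply PI_RGT_0.
  apply (filterlim_ext_loc AB_ratio_ext).
  - apply (filter_imp (fun t => 0 < t < 2 * PI)); [| apply at_left_interval; lra].
    intros t Ht. rewrite fa_eq, fb_eq by lra. symmetry. apply AB_ratio_ext_eq, Ht.
  - rewrite <- AB_ratio_ext_2PI.
    exact (filterlim_filter_le_1 _ (filter_le_within _) AB_ratio_ext_continuous).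
Qed.

Theorem lemma2 :
  (* (i) for a *)
  (forall x y, 0 < x -> x < y -> y < 2 * PI -> fa y < fa x) /\
  (forall t, 0 < t < 2 * PI -> 0 < fa t) /\
  fa 0 = 1/2 /\ fa (2 * PI) = 0 /\
  (forall t, 0 < t < 2 * PI -> fa 0 > fa t /\ fa t > fa (2 * PI)) /\
  (* (i) for b *)
  (forall x y, 0 < x -> x < y -> y < 2 * PI -> fb y < fb x) /\
  (forall t, 0 < t < 2 * PI -> 0 < fb t) /\
  fb 0 = 1/24 /\ fb (2 * PI) = 0 /\
  (forall t, 0 < t < 2 * PI -> fb 0 > fb t /\ fb t > fb (2 * PI)) /\
  (* (ii) *)
  (forall x y, 0 <= x -> x < y -> y < 2 * PI -> fa x / fb x < fa y / fb y) /\
  is_lub (fun r => exists t, 0 < t < 2 * PI /\ r = fa t / fb t) (4 * PI ^ 2) /\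
  filterlim (fun t => fa t / fb t) (at_left (2 * PI)) (locally (4 * PI ^ 2)).
Proof.
  assert (0 < PI) by apply PI_RGT_0.
  assert (fa_2PI : fa (2 * PI) = 0) by (rewrite fa_eq by lra; exact A_2PI).
  assert (fb_2PI : fb (2 * PI) = 0) by (rewrite fb_eq by lra; exact B_2PI).
  split; [intros x y **; rewrite !fa_eq by lra; apply A_decreasing; lra |].
  split; [intros t Ht; rewrite fa_eq by lra; apply A_pos, Ht |].
  split; [exact fa_0 |]. split; [exact fa_2PI |].
  split.
  { intros t Ht. rewrite fa_0, fa_2PI, fa_eq by lra.
    split; [apply A_lt_half | apply A_pos]; lra. }
  split; [intros x y **; rewrite !fb_eq by lra; apply B_decreasing; lra |].
  split; [intros t Ht; rewrite fb_eq by lra; apply B_pos, Ht |].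
  split; [exact fb_0 |]. split; [exact fb_2PI |].
  split.
  { intros t Ht. rewrite fb_0, fb_2PI, fb_eq by lra.
    split; [apply B_lt_24th | apply B_pos]; lra. }
  split; [exact ratio_increasing |].
  split; [| exact ratio_left_limit].
  apply is_lub_increasing_left_limit; [lra | | exact ratio_left_limit].
  intros x y Hx Hxy Hy. apply ratio_increasing; lra.
Qed.
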